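(* Let $n$ be a positive integer, and consider the one-way communication problem ''evaluate $f$ with domain $[n]$ on $0$''. Let $\mathcal{P}$ be any protocol for this problem in which Bob always outputs the correct answer. Then there is some input on which Alice's message in $\mathcal{P}$ contains at least $n\log_2 n$ bits.
   Context: Notation: $[n]=\{0,\dots,n-1\}$. The communication problem ''evaluate $f$ with domain $[n]$ on $0$'' is set up as follows. Let $k_0,\dots,k_{n-1}$ be any permutation of $[n]$, and let $v_0,\dots,v_{n-1}$ be any sequence of elements of $[n]$. These two sequences represent the function $f$ with $f(k_i)=v_i$. - Alice knows $v_0,\dots,v_{n-1}$, and Bob knows $k_0,\dots,k_{n-1}$. - Alice sends a single message to Bob, which may depend only on her input. - Bob, using the message and his own input, must output the $v_j$ such that $k_j=0$. *)

From Stdlib Require Import Reals.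
From mathcomp Require Import all_boot all_fingroup.
Set Implicit Arguments. Unset Strict Implicit. Unset Printing Implicit Defensive.

(* Alice's input: the values v_0..v_{n-1}, i.e. a function [n] -> [n].
   Bob's input: the keys k_0..k_{n-1}, a permutation of [n] (i |-> k_i).
   A message is a finite bit string. *)
Definition alice_input (n : nat) := {ffun 'I_n -> 'I_n}.
Definition bob_input (n : nat) := {perm 'I_n}.
Definition message := seq bool.

(* Messages are
   required to form a prefix-free code (Bob must be able to tell where the
   message ends); this includes fixed-length messages as a special case. *)
Record protocol (n : nat) := Protocol {
  alice : alice_input n -> message;
  bob : bob_input n -> message -> 'I_n;
  alice_prefix_free : forall v v' : alice_input n,
      prefix (alice v) (alice v') -> alice v = alice v'
}.

Definition always_correct (n : nat) (P : protocol n) : Prop :=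
  forall (v : alice_input n) (k : bob_input n) (j : 'I_n),
    nat_of_ord (k j) = 0%N -> bob P k (alice P v) = v j.

Definition log2 (x : R) : R := Rdiv (ln x) (ln (INR 2)).

(** Correctness forces Alice's encoding to be injective: if two inputs [v], [v']
    produced the same message, then for every [j] Bob, holding a permutation
    sending [j] to [0], would output both [v j] and [v' j].  A prefix-free
    injective binary code of a set of size [N] has a codeword of length at
    least [log2 N]: padding all codewords with zeros to the maximal length [L]
    keeps them distinct, since no codeword is a proper prefix of another, so
    [N <= 2 ^ L].  Here [N = n ^ n]. *)

From Stdlib Require Import Reals Lra.
From mathcomp Require Import all_boot all_fingroup.

Set Implicit Arguments.
Unset Strict Implicit.
Unset Printing Implicit Defensive.

Lemma prefix_comparable (T : eqType) (s1 s2 t : seq T) :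
  prefix s1 t -> prefix s2 t -> prefix s1 s2 || prefix s2 s1.
Proof.
wlog le_s12 : s1 s2 / (size s1 <= size s2)%N.
  move=> wlog_le p1 p2; case: (leqP (size s1) (size s2)) => [le12 | /ltnW le21].
    exact: wlog_le.
  by rewrite orbC; apply: wlog_le.
rewrite [prefix s1 t]prefixE [prefix s2 t]prefixE => /eqP take_s1 /eqP take_s2.
by rewrite prefixE -take_s2 take_takel // take_s1 eqxx.
Qed.

Definition pad (L : nat) (s : seq bool) : seq bool := s ++ nseq (L - size s) false.

Lemma size_pad L s : (size s <= L)%N -> size (pad L s) = L.
Proof. by move=> le_sL; rewrite size_cat size_nseq subnKC. Qed.

Section PrefixFreeCode.

Variables (T : finType) (c : T -> seq bool).
Hypothesis c_inj : injective c.
Hypothesis c_prefix_free : forall x y, prefix (c x) (c y) -> c x = c y.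

Lemma pad_code_inj L : injective (fun x => pad L (c x)).
Proof.
move=> x y eq_pad; apply: c_inj.
have pre_x : prefix (c x) (pad L (c x)) by apply: prefix_prefix.
have pre_y : prefix (c y) (pad L (c x)) by rewrite eq_pad prefix_prefix.
by case/orP: (prefix_comparable pre_x pre_y) => /c_prefix_free.
Qed.

Lemma card_le_exp2_size (x0 : T) : exists x, (#|T| <= 2 ^ size (c x))%N.
Proof.
have [x _ size_max] := @arg_maxnP T x0 xpredT (fun x => size (c x)) isT.
exists x; set L := size (c x).
have size_padL y : size (pad L (c y)) == L by rewrite size_pad //; apply: size_max.
have tuple_inj : injective (fun y => Tuple (size_padL y) : L.-tuple bool).
  by move=> y z /(congr1 val) /pad_code_inj.
by have := leq_card _ tuple_inj; rewrite card_tuple card_bool.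
Qed.

End PrefixFreeCode.

Lemma always_correct_alice_inj (n : nat) (P : protocol n) :
  (0 < n)%N -> always_correct P -> injective (alice P).
Proof.
move=> n_gt0 correct v v' eq_msg; apply/ffunP => j.
have k_j0 : nat_of_ord ((tperm j (Ordinal n_gt0) : bob_input n) j) = 0%N.
  by rewrite tpermL.
by rewrite -(correct v _ _ k_j0) -(correct v' _ _ k_j0) eq_msg.
Qed.

Section Log2.

Local Open Scope R_scope.

Lemma INR_expn (m k : nat) : INR (expn m k) = INR m ^ k.
Proof. by elim: k => [|k IH] //; rewrite expnS mult_INR IH. Qed.

Lemma ln_le (x y : R) : 0 < x -> x <= y -> ln x <= ln y.
Proof.
move=> x_gt0 le_xy; apply: Rnot_lt_le => /ln_lt_inv lt_yx.
have := lt_yx ltac:(lra) x_gt0; lra.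
Qed.

Lemma ln2_gt0 : 0 < ln (INR 2).
Proof. by rewrite -ln_1; apply: ln_increasing; [lra | apply: lt_1_INR]. Qed.

Lemma log2_le (x y : R) : 0 < x -> x <= y -> log2 x <= log2 y.
Proof.
move=> x_gt0 le_xy; apply: Rmult_le_compat_r; last exact: ln_le.
by apply/Rlt_le/Rinv_0_lt_compat/ln2_gt0.
Qed.

Lemma log2_pow (x : R) (k : nat) : 0 < x -> log2 (x ^ k) = INR k * log2 x.
Proof. by move=> x_gt0; rewrite /log2 ln_pow // /Rdiv Rmult_assoc. Qed.

Lemma log2_2 : log2 (INR 2) = 1.
Proof. by apply: Rinv_r; apply/Rgt_not_eq/ln2_gt0. Qed.

Lemma log2_le_exp2 (m L : nat) :
  (0 < m)%N -> (m <= 2 ^ L)%N -> log2 (INR m) <= INR L.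
Proof.
move=> m_gt0 le_m2L.
rewrite -[INR L]Rmult_1_r -log2_2 -log2_pow; last exact/lt_0_INR/ltP.
apply: log2_le; first exact/lt_0_INR/ltP.
by rewrite -INR_expn; apply/le_INR/leP.
Qed.

End Log2.

Theorem lemma1 (n : nat) (Hn : (0 < n)%N) (P : protocol n) :
  always_correct P ->
  exists v : alice_input n,
    Rle (Rmult (INR n) (log2 (INR n))) (INR (size (alice P v))).
Proof.
move=> correct.
have [v card_le] := card_le_exp2_size (always_correct_alice_inj Hn correct)
  (@alice_prefix_free n P) [ffun=> Ordinal Hn].
rewrite card_ffun !card_ord in card_le.
exists v; rewrite -log2_pow; last exact/lt_0_INR/ltP.
by rewrite -INR_expn; apply: log2_le_exp2; rewrite ?expn_gt0 ?Hn.
Qed.
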